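(* For each positive integer $n$ let $K_n=\{\alpha_{0n},\alpha_{1n},\dots,\alpha_{nn}\}\subset[0,1]$ with $\alpha_{0n}\le\alpha_{1n}\le\cdots\le\alpha_{nn}$, and suppose $$\lim_{n\to\infty}\max_{p\in[0,1]}\sum_{k=0}^n\binom{n}{k}p^k(1-p)^{n-k}|p-\alpha_{kn}|=0.$$ Then the normalized counting measures $\delta_{K_n}=\frac{1}{n+1}\sum_{j=0}^n\delta_{\alpha_{jn}}$ converge weak$^*$ to Lebesgue measure $dx$ on $[0,1]$ as $n\to\infty$, i.e. $\lim_{n\to\infty}\int_0^1 g\,d\delta_{K_n}=\int_0^1 g(x)\,dx$ for every $g\in C[0,1]$.
   Context: $\delta_x$ denotes the unit point mass (Dirac measure) at $x$. *)

From HB Require Import structures.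
From mathcomp Require Import all_boot all_order all_algebra.
From mathcomp Require Import all_classical all_reals all_analysis.
Set Implicit Arguments. Unset Strict Implicit. Unset Printing Implicit Defensive.
Import Order.TTheory GRing.Theory Num.Theory numFieldNormedType.Exports.
Local Open Scope classical_set_scope.
Local Open Scope ring_scope.

(* alpha n k = alpha_{kn}, for k = 0..n *)

Definition bern_dev (R : realType) (alpha : nat -> nat -> R) (n : nat) (p : R) : R :=
  \sum_(k < n.+1) ('C(n, k))%:R * p ^+ k * (1 - p) ^+ (n - k) * `|p - alpha n k|.

(* max_{p in [0,1]} of bern_dev (the max exists by continuity; written as sup) *)
Definition max_bern_dev (R : realType) (alpha : nat -> nat -> R) (n : nat) : R :=
  sup [set bern_dev alpha n p | p in `[(0:R), 1]%classic].

Definition int_deltaK (R : realType) (alpha : nat -> nat -> R) (g : R -> R) (n : nat) : R :=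
  (n.+1%:R)^-1 * \sum_(j < n.+1) g (alpha n j).

From HB Require Import structures.
From mathcomp Require Import all_boot all_order all_algebra.
From mathcomp Require Import all_classical all_reals all_analysis.
From mathcomp Require Import lra.
Import Order.TTheory GRing.Theory Num.Theory numFieldNormedType.Exports.
Local Open Scope classical_set_scope.
Local Open Scope ring_scope.

(* The Beta integral [\int_0^1 'C(n, k) p^k (1 - p)^(n - k) dp = 1/(n+1)] turns
   the mean of g over K_n into the integral over [0, 1] of the Bernstein-type
   polynomial [B_n g p = \sum_k 'C(n, k) p^k (1 - p)^(n - k) g(alpha_kn)].
   A continuous g on [0, 1] is bounded and uniformly continuous, hence
   [|g a - g p| <= eps + C_eps |a - p|]; averaging against the Bernstein weights,
   which sum to 1, gives [|B_n g p - g p| <= eps + C_eps * max_bern_dev alpha n],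
   and the right-hand side tends to eps. *)

Section heine_cantor.
Context {R : realType} {U V : normedModType R}.

Lemma compact_within_continuous_unif [A : set U] [g : U -> V] :
  compact A -> {within A, continuous g} ->
  forall e, 0 < e -> exists2 d, 0 < d &
    forall x y, A x -> A y -> `|x - y| < d -> `|g x - g y| < e.
Proof.
move=> /compact_near_coveringP/near_covering_withinP cA gc e e0.
suff : \forall d \near 0^'+,
    A `<=` [set x | forall y, A y -> `|x - y| < d -> `|g x - g y| < e].
  move=> /(filterI (nbhs_right_gt 0)) /filter_ex [d [d0 Hd]].
  by exists d => // x y Ax Ay; exact: Hd.
apply: cA => x Ax.
have e2 : 0 < e / 2 by rewrite divr_gt0.
have /cvgrPdist_lt /(_ _ e2) := (@subspace_continuousP _ A _ g).1 gc x Ax.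
rewrite /within nearE /= => /nbhs_ballP [r /= r0 gx].
have r2 : 0 < r / 2 by rewrite divr_gt0.
exists (ball x (r / 2), [set d | 0 < d < r / 2]); first split => /=.
- exact: nbhsx_ballx.
- exists (r / 2) => // d /=; rewrite sub0r normrN => + d0.
  by rewrite gtr0_norm // d0.
case=> x' d [/= xx' /andP[d0 dr]] Ax' y Ay x'y.
have xy : ball x r y.
  rewrite -ball_normE /= (splitr r); apply: le_lt_trans (ler_distD x' _ _) _.
  by rewrite ltrD //; [rewrite -ball_normE in xx' | exact: lt_trans x'y dr].
have xx'r : ball x r x'.
  by apply: le_ball xx'; rewrite ler_pdivrMr // ler_peMr ?ler1n // ltW.
rewrite (splitr e); apply: le_lt_trans (ler_distD (g x) _ _) _.
by rewrite distrC ltrD //; [exact: gx | exact: gx].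
Qed.

End heine_cantor.

Lemma Rintegral_sum d {T : measurableType d} {R : realType}
    (mu : {measure set T -> \bar R}) (D : set T) (I : Type) (s : seq I)
    (f : I -> T -> R) :
  measurable D -> (forall i, mu.-integrable D (EFin \o f i)) ->
  \int[mu]_(x in D) \sum_(i <- s) f i x = \sum_(i <- s) \int[mu]_(x in D) f i x.
Proof.
move=> mD fi; rewrite /Rintegral; under eq_integral do rewrite -sumEFin.
by rewrite integral_sum // -sum_fine // => i _; have := integrable_fin_num mD (fi i).
Qed.

Lemma bounded_unif_continuous_dist_le {R : realType} [A : set R] [g : R -> R]
    [M d e : R] : 0 < d -> (forall x, A x -> `|g x| <= M) ->
  (forall x y, A x -> A y -> `|x - y| < d -> `|g x - g y| < e) ->
  forall x y, A x -> A y -> `|g x - g y| <= e + 2 * M / d * `|x - y|.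
Proof.
move=> d0 gM gd x y Ax Ay.
have M0 : 0 <= M := le_trans (normr_ge0 _) (gM x Ax).
have e0 : 0 < e by have := gd x x Ax Ax; rewrite !subrr !normr0; apply.
have [xy|yx] := ltP `|x - y| d.
  rewrite (le_trans (ltW (gd _ _ Ax Ay xy))) // lerDl.
  by rewrite mulr_ge0 // divr_ge0 ?mulr_ge0 // ltW.
apply: le_trans (ler_normB _ _) _; apply: le_trans (lerD (gM _ Ax) (gM _ Ay)) _.
rewrite -[M + M]add0r; apply: lerD; first exact: ltW.
rewrite -[M + M]mulr2n -[M *+ 2]mulr_natl -(mulrA (2 * M)) ler_peMr ?mulr_ge0 //.
by rewrite mulrC ler_pdivlMr // mul1r.
Qed.

Section bernstein.
Context {R : realType}.
Local Notation mu := (@lebesgue_measure R).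
Local Notation I01 := (`[(0:R), 1]%classic).

Let mI01 : @measurable _ (measurableTypeR R) I01 := measurable_itv _.

Let integrable01 (f : R -> R) :
  {within I01, continuous f} -> mu.-integrable I01 (EFin \o f).
Proof.
by move=> fc; apply: continuous_compact_integrable => //; exact: segment_compact.
Qed.

Definition bernstein (n k : nat) (p : R) : R :=
  'C(n, k)%:R * p ^+ k * (1 - p) ^+ (n - k).

Lemma sum_bernstein n p : \sum_(k < n.+1) bernstein n k p = 1.
Proof.
rewrite -[RHS](expr1n _ n) -[in RHS](subrK p 1) exprDn.
by apply: eq_bigr => k _; rewrite /bernstein mulr_natl mulrnAl mulrC.
Qed.

Lemma bernstein_ge0 n k p : I01 p -> 0 <= bernstein n k p.
Proof.
by rewrite /= in_itv /= => /andP[p0 p1]; rewrite !mulr_ge0 ?exprn_ge0 ?subr_ge0.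
Qed.

Lemma bernsteinE n k :
  bernstein n k = (fun p => 'C(n, k)%:R * XMonemX k (n - k) p).
Proof. by apply/funext => p; rewrite /XMonemX mulrA. Qed.

Lemma continuous_bernstein n k : continuous (bernstein n k).
Proof.
rewrite bernsteinE => p; apply: (continuousM (s := cst _)).
  exact: cst_continuous.
exact: continuous_XMonemX.
Qed.

Lemma continuous_bernsteinMr n k c : continuous (fun p => bernstein n k p * c).
Proof.
move=> p; apply: (continuousM (t := cst _)); first exact: continuous_bernstein.
exact: cst_continuous.
Qed.

Lemma Rintegral_bernstein n k : (k <= n)%N ->
  \int[mu]_(p in I01) bernstein n k p = n.+1%:R^-1.
Proof.
move=> kn; rewrite bernsteinE RintegralZl; last 2 first.
- exact: mI01.
- exact: integrable_XMonemX.
have := @beta_fun_fact R k (n - k).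
rewrite /beta_fun -Rintegral_mkcond /= => ->.
rewrite subnKC // mulrA -natrM bin_fact // factS natrM invfM.
by rewrite mulrCA divff ?mulr1.
Qed.

Variable alpha : nat -> nat -> R.

Definition bernstein_approx (g : R -> R) (n : nat) (p : R) : R :=
  \sum_(k < n.+1) bernstein n k p * g (alpha n k).

Lemma continuous_bernstein_approx g n : continuous (bernstein_approx g n).
Proof.
apply: continuous_big => [|k _]; first exact: add_continuous.
exact: continuous_bernsteinMr.
Qed.

Lemma int_deltaK_bernstein_approx g n :
  int_deltaK alpha g n = \int[mu]_(p in I01) bernstein_approx g n p.
Proof.
rewrite Rintegral_sum //; last first.
  by move=> k; apply/integrable01/continuous_subspaceT/continuous_bernsteinMr.
rewrite /int_deltaK big_distrr; apply: eq_bigr => k _.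
rewrite RintegralZr //.
  by rewrite Rintegral_bernstein //; exact: ltn_ord k.
exact/integrable01/continuous_subspaceT/continuous_bernstein.
Qed.

Lemma dist_bernstein_approx_le g n p (c C : R) : I01 p ->
  (forall k, (k <= n)%N -> `|g (alpha n k) - g p| <= c + C * `|p - alpha n k|) ->
  `|bernstein_approx g n p - g p| <= c + C * bern_dev alpha n p.
Proof.
move=> Ip gcC.
have bge0 k := bernstein_ge0 n k p Ip.
rewrite -[g p]mul1r -(sum_bernstein n p) big_distrl -sumrB /=.
apply: le_trans (ler_norm_sum _ _ _) _.
pose dev k := c + C * `|p - alpha n k|.
apply: (@le_trans _ _ (\sum_(k < n.+1) bernstein n k p * dev k)).
  apply: ler_sum => k _; rewrite -mulrBr normrM ger0_norm //.
  by rewrite ler_wpM2l // gcC // -ltnS.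
rewrite /bern_dev; under eq_bigr do rewrite mulrDr mulrCA.
by rewrite big_split /= -big_distrl -big_distrr /= sum_bernstein mul1r.
Qed.

Lemma bern_dev_le1 n p : I01 p -> (forall k, (k <= n)%N -> I01 (alpha n k)) ->
  bern_dev alpha n p <= 1.
Proof.
move=> Ip Ia; rewrite -(sum_bernstein n p); apply: ler_sum => k _.
rewrite -[leRHS]mulr1 ler_wpM2l ?bernstein_ge0 //.
move: Ip (Ia k (ltn_ord k)); rewrite /= !in_itv /= => /andP[p0 p1] /andP[a0 a1].
by rewrite ler_norml; apply/andP; split; lra.
Qed.

Lemma bern_dev_le_max n p : I01 p -> (forall k, (k <= n)%N -> I01 (alpha n k)) ->
  bern_dev alpha n p <= max_bern_dev alpha n.
Proof.
move=> Ip Ia; apply: ub_le_sup; last by exists p.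
by exists 1 => _ [q Iq <-]; exact: bern_dev_le1.
Qed.

Lemma normr_Rintegral01_le (f : R -> R) (c : R) :
  mu.-integrable I01 (EFin \o f) -> (forall p, I01 p -> `|f p| <= c) ->
  `|\int[mu]_(p in I01) f p| <= c.
Proof.
move=> fi fc; apply: le_trans (le_normr_Rintegral mI01 fi) _.
have ic : mu.-integrable I01 (EFin \o cst c).
  exact/integrable01/continuous_subspaceT/cst_continuous.
apply: le_trans (le_Rintegral mI01 (integrable_norm fi) ic fc) _.
have := @lebesgue_measure_itv R `[0, 1]; rewrite /= lte01 oppr0 adde0 => mu01.
by by rewrite Rintegral_cst // [fine _](_ : _ = 1) ?mulr1 // (congr1 fine mu01).
Qed.

Lemma dist_int_deltaK_le g n (c C : R) :
  {within I01, continuous g} -> 0 <= C ->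
  (forall k, (k <= n)%N -> I01 (alpha n k)) ->
  (forall a p, I01 a -> I01 p -> `|g a - g p| <= c + C * `|a - p|) ->
  `|int_deltaK alpha g n - \int[mu]_(p in I01) g p|
    <= c + C * max_bern_dev alpha n.
Proof.
move=> gc C0 Ia gcC.
have iB : mu.-integrable I01 (EFin \o bernstein_approx g n).
  exact/integrable01/continuous_subspaceT/continuous_bernstein_approx.
rewrite int_deltaK_bernstein_approx -RintegralB //; last exact: integrable01.
apply: normr_Rintegral01_le => [|p Ip].
  have -> : EFin \o (fun p => bernstein_approx g n p - g p) =
      ((EFin \o bernstein_approx g n) \- (EFin \o g))%E.
    by apply/funext => p; rewrite /= EFinB.
  by apply: integrableB => //; exact: integrable01.
apply: le_trans (dist_bernstein_approx_le g n p c C Ip _) _.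
  by move=> k kn; rewrite distrC; apply: gcC => //; exact: Ia.
by rewrite lerD2l ler_wpM2l // bern_dev_le_max.
Qed.

End bernstein.

Theorem theorem3p4 (R : realType) (alpha : nat -> nat -> R)
  (Hin : forall n k, (0 < n)%N -> (k <= n)%N -> 0 <= alpha n k <= 1)
  (Hmono : forall n k, (0 < n)%N -> (k < n)%N -> alpha n k <= alpha n k.+1)
  (Hlim : max_bern_dev alpha n @[n --> \oo] --> 0) :
  forall g : R -> R, {within `[(0:R), 1]%classic, continuous g} ->
    int_deltaK alpha g n @[n --> \oo] --> Rintegral lebesgue_measure `[(0:R), 1]%classic g.
Proof.
move=> g gc.
have [M M0 gM] : exists2 M, 0 < M & forall x, `[(0:R), 1]%classic x -> `|g x| <= M.
  have /compact_bounded[M [_ Mg]] := continuous_compact gc (@segment_compact R 0 1).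
  exists (`|M| + 1) => [|x Ix]; first by rewrite ltr_pwDr.
  by apply: Mg; [rewrite (le_lt_trans (ler_norm M)) ?ltrDl | exists x].
apply/cvgrPdist_le => e e0; have e2 : 0 < e / 2 by rewrite divr_gt0.
have [d d0 gd] := compact_within_continuous_unif (@segment_compact R 0 1) gc _ e2.
have C0 : 0 < 2 * M / d by rewrite !mulr_gt0 ?invr_gt0.
move/cvgrPdist_le: Hlim => /(_ _ (divr_gt0 e2 C0)) Hlim.
near=> n; rewrite distrC.
apply: le_trans (dist_int_deltaK_le alpha g n (e / 2) _ gc (ltW C0) _ _) _.
- by move=> k kn; rewrite /= in_itv /= Hin //; near: n; exists 1%N.
- exact: bounded_unif_continuous_dist_le d0 gM gd.
rewrite [leRHS](splitr e) lerD2l mulrC -ler_pdivlMr //; near: n.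
apply: filterS Hlim => m.
by rewrite sub0r normrN => /(le_trans (ler_norm _)).
Unshelve. all: by end_near.
Qed.
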